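(* Let $A=\bigsqcup_{n\in\omega}A_n$ where each $A_n$ is a set equipped with a total order $<_n$ order-isomorphic to $(\mathbb{Z},<)$, and for $a\in A_n$ let $s(a)$ be the immediate successor of $a$ in $(A_n,<_n)$. Let $J=A\times\{0,1\}$ and consider the free monoid on the alphabet $J^{\pm1}=\{(a,i),(a,i)^{-1}: a\in A, i\in\{0,1\}\}$ with empty word $e$. Let $\mathcal{R}$ be the rewriting system with, for every $a\in A$, the rules (i) $(a,0)(a,0)^{-1}\mapsto e$; (ii) $(a,0)^{-1}(a,0)\mapsto e$; (iii) $(a,1)(a,1)^{-1}\mapsto e$; (iv) $(a,1)^{-1}(a,1)\mapsto e$; (v) $(s(a),0)(a,1)\mapsto (s(a),1)^{-1}(s(a),0)$; (vi) $(s(a),0)(a,1)^{-1}\mapsto (s(a),1)(s(a),0)$; (vii) $(s(a),0)^{-1}(s(a),1)\mapsto (a,1)^{-1}(s(a),0)^{-1}$; (viii) $(s(a),0)^{-1}(s(a),1)^{-1}\mapsto (a,1)(s(a),0)^{-1}$. Then $\mathcal{R}$ is terminating and locally confluent (hence confluent), so every equivalence class of $\leftrightarrow_{\mathcal{R}}^*$ contains a unique terminus. Moreover every terminus is a freely reduced word, and the set $R$ of termini is a set of normal forms for the group $\mathcal{G}=F(J)/\langle\langle\{(s(a),0)(a,1)(s(a),0)^{-1}(s(a),1)\}_{a\in A}\rangle\rangle$: each element of $\mathcal{G}$ is represented by exactly one word in $R$.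
   Context: Work in $\mathsf{ZFC}$. For a rewriting system $\mathcal{R}$ (a set of pairs of words) on a free monoid, $w_0\to_{\mathcal{R}}w_1$ means $w_0\equiv v_0v_1v_2$, $w_1\equiv v_0v_1'v_2$ with $(v_1,v_1')\in\mathcal{R}$; $\to^*_{\mathcal{R}}$ is its transitive closure and $\leftrightarrow^*_{\mathcal{R}}$ the generated equivalence relation. $\mathcal{R}$ is terminating if there is no infinite chain $w_0\to_{\mathcal{R}}w_1\to_{\mathcal{R}}\cdots$; locally confluent if whenever $w_0\to_{\mathcal{R}}w_1$ and $w_0\to_{\mathcal{R}}w_2$ there is $w_3$ with $w_1\to^*_{\mathcal{R}}w_3$ and $w_2\to^*_{\mathcal{R}}w_3$; confluent is the same with $\to^*_{\mathcal{R}}$ in the hypotheses. A terminus is a word $w$ such that no rule applies to it. $F(J)$ is the free group on $J$, and $\langle\langle X\rangle\rangle$ the normal closure. *)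

From Stdlib Require Import List ZArith Relations.
Import ListNotations.
Open Scope Z_scope.

Section Defs.
Variable A : Type.

(* A letter of J^{±1}: ((a, i), sign) with i : bool (false = 0, true = 1)
   and sign = true for (a,i), sign = false for (a,i)^{-1}. *)
Definition letter := ((A * bool) * bool)%type.
Definition word := list letter.
Definition pos (a : A) (i : bool) : letter := ((a, i), true).
Definition neg (a : A) (i : bool) : letter := ((a, i), false).
Definition linv (x : letter) : letter := (fst x, negb (snd x)).

(* A = disjoint union of blocks A_n (n = blk a), ordered by lt within a block. *)
Definition is_succ (blk : A -> nat) (lt : A -> A -> Prop) (a b : A) : Prop :=
  blk b = blk a /\ lt a b /\
  ~ (exists c, blk c = blk a /\ lt a c /\ lt c b).

Definition blocks_Z (blk : A -> nat) (lt : A -> A -> Prop) : Prop :=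
  forall n : nat, exists f : Z -> A,
    (forall z, blk (f z) = n) /\
    (forall a, blk a = n -> exists z, f z = a) /\
    (forall z1 z2, lt (f z1) (f z2) <-> z1 < z2).

Inductive rule (blk : A -> nat) (lt : A -> A -> Prop) : word -> word -> Prop :=
| r1 a : rule blk lt [pos a false; neg a false] []
| r2 a : rule blk lt [neg a false; pos a false] []
| r3 a : rule blk lt [pos a true; neg a true] []
| r4 a : rule blk lt [neg a true; pos a true] []
| r5 a b : is_succ blk lt a b ->
    rule blk lt [pos b false; pos a true] [neg b true; pos b false]
| r6 a b : is_succ blk lt a b ->
    rule blk lt [pos b false; neg a true] [pos b true; pos b false]
| r7 a b : is_succ blk lt a b ->
    rule blk lt [neg b false; pos b true] [neg a true; neg b false]
| r8 a b : is_succ blk lt a b ->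
    rule blk lt [neg b false; neg b true] [pos a true; neg b false].

Definition step (Rl : word -> word -> Prop) (w0 w1 : word) : Prop :=
  exists v0 v1 v1' v2, w0 = v0 ++ v1 ++ v2 /\ w1 = v0 ++ v1' ++ v2 /\ Rl v1 v1'.

Definition steps (Rl : word -> word -> Prop) := clos_refl_trans word (step Rl).
Definition conv (Rl : word -> word -> Prop) := clos_refl_sym_trans word (step Rl).

Definition terminating (Rl : word -> word -> Prop) : Prop :=
  ~ exists f : nat -> word, forall n, step Rl (f n) (f (S n)).

Definition locally_confluent (Rl : word -> word -> Prop) : Prop :=
  forall w0 w1 w2, step Rl w0 w1 -> step Rl w0 w2 ->
    exists w3, steps Rl w1 w3 /\ steps Rl w2 w3.

Definition confluent (Rl : word -> word -> Prop) : Prop :=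
  forall w0 w1 w2, steps Rl w0 w1 -> steps Rl w0 w2 ->
    exists w3, steps Rl w1 w3 /\ steps Rl w2 w3.

Definition terminus (Rl : word -> word -> Prop) (w : word) : Prop :=
  ~ exists w', step Rl w w'.

Definition freely_reduced (w : word) : Prop :=
  ~ exists u v x, w = u ++ [x; linv x] ++ v.

(* The group G = F(J) / <<relators>>: two words represent the same element
   iff they are related by the congruence on the free monoid generated by
   x x^{-1} = e (free reduction) and r = e for each relator r. *)
Inductive group_rel (blk : A -> nat) (lt : A -> A -> Prop) : word -> word -> Prop :=
| gr_free x : group_rel blk lt [x; linv x] []
| gr_rel a b : is_succ blk lt a b ->
    group_rel blk lt [pos b false; pos a true; neg b false; pos b true] [].

Definition same_in_G (blk : A -> nat) (lt : A -> A -> Prop) : word -> word -> Prop :=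
  clos_refl_sym_trans word (step (group_rel blk lt)).

End Defs.
Arguments pos {A}. Arguments neg {A}. Arguments linv {A}. Arguments is_succ {A}. Arguments blocks_Z {A}. Arguments rule {A}. Arguments step {A}. Arguments steps {A}. Arguments conv {A}. Arguments terminating {A}. Arguments locally_confluent {A}. Arguments confluent {A}. Arguments terminus {A}. Arguments freely_reduced {A}. Arguments group_rel {A}. Arguments same_in_G {A}.

(* Every rule either cancels a pair of letters or moves a 0-letter to the right of a 1-letter,
   so the length plus the number of (0-letter, later 1-letter) pairs strictly decreases:
   the system terminates.  Left-hand sides are two-letter words and each determines its
   right-hand side (a letter of a block isomorphic to Z has a unique predecessor), so local
   confluence reduces to the three-letter overlaps, which join by direct computation; Newman's
   lemma then gives confluence and unique termini.  Every rule is an equality in G, and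
   conversely free cancellation and the relators are R-convertible, so R-convertibility is
   equality in G and the termini are normal forms for G. *)

From Stdlib Require Import List ZArith Relations Lia Classical.
From Stdlib Require Relations_3_facts.
Import ListNotations.
Local Open Scope nat_scope.

Lemma Rstar_iff_clos_rt (U : Type) (r : U -> U -> Prop) x y :
  Relations_2.Rstar U r x y <-> clos_refl_trans U r x y.
Proof.
  rewrite clos_rt_rt1n_iff; split; induction 1; econstructor; eauto.
Qed.

Section Rewriting.
Context {A : Type} {Rl : word A -> word A -> Prop}.
Implicit Types (u v w : word A).

Lemma step_ctx u w w' v : step Rl w w' -> step Rl (u ++ w ++ v) (u ++ w' ++ v).
Proof.
  intros (v0 & v1 & v1' & v2 & -> & -> & H).
  exists (u ++ v0), v1, v1', (v2 ++ v); rewrite <- !app_assoc; auto.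
Qed.

Lemma steps_ctx u w w' v : steps Rl w w' -> steps Rl (u ++ w ++ v) (u ++ w' ++ v).
Proof.
  induction 1; [apply rt_step, step_ctx; auto | apply rt_refl | eapply rt_trans; eauto].
Qed.

Lemma conv_ctx u w w' v : conv Rl w w' -> conv Rl (u ++ w ++ v) (u ++ w' ++ v).
Proof.
  induction 1; [apply rst_step, step_ctx; auto | apply rst_refl
               | apply rst_sym; auto | eapply rst_trans; eauto].
Qed.

Lemma steps_cons c w w' : steps Rl w w' -> steps Rl (c :: w) (c :: w').
Proof. intros H; apply (steps_ctx [c] _ _ []) in H; rewrite !app_nil_r in H; exact H. Qed.

Lemma steps_app_r w w' v : steps Rl w w' -> steps Rl (w ++ v) (w' ++ v).
Proof. exact (steps_ctx [] w w' v). Qed.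

Lemma step_cons c w w' : step Rl w w' -> step Rl (c :: w) (c :: w').
Proof. intros H; apply (step_ctx [c] _ _ []) in H; rewrite !app_nil_r in H; exact H. Qed.

Lemma step_pair_head p q v r : Rl [p; q] r -> step Rl (p :: q :: v) (r ++ v).
Proof. intros H; exists [], [p; q], r, v; auto. Qed.

Lemma conv_rule l r : Rl l r -> conv Rl l r.
Proof. intros H; apply rst_step; exists [], l, r, []; rewrite !app_nil_r; auto. Qed.

Definition joinable u v : Prop := exists z, steps Rl u z /\ steps Rl v z.

Lemma terminus_steps r z : terminus Rl r -> steps Rl r z -> z = r.
Proof.
  intros T S; apply clos_rt_rt1n in S; destruct S; auto.
  exfalso; apply T; eauto.
Qed.

Lemma confluent_conv_joinable w w' : confluent Rl -> conv Rl w w' -> joinable w w'.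
Proof.
  intros Hc; induction 1 as [x y H | x | x y _ [z [? ?]] | x y z' _ [z1 [? ?]] _ [z2 [? ?]]].
  - exists y; split; [apply rt_step; auto | apply rt_refl].
  - exists x; split; apply rt_refl.
  - exists z; auto.
  - destruct (Hc y z1 z2) as (z & ? & ?); auto.
    exists z; split; eapply rt_trans; eauto.
Qed.

Section Measure.
Variable m : word A -> nat.
Hypothesis step_decreases : forall w w', step Rl w w' -> m w' < m w.

Lemma terminating_of_measure : terminating Rl.
Proof.
  intros [f Hf].
  assert (Hdec : forall n, m (f n) + n <= m (f 0)).
  { induction n; [lia | specialize (step_decreases _ _ (Hf n)); lia]. }
  specialize (Hdec (S (m (f 0)))); lia.
Qed.

Lemma noetherian_of_measure : Relations_3.Noetherian (word A) (step Rl).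
Proof.
  intros w; induction w as [w IH] using (well_founded_induction (well_founded_ltof _ m)).
  constructor; intros w' S; apply IH, step_decreases, S.
Qed.

Lemma terminus_exists w : exists r, steps Rl w r /\ terminus Rl r.
Proof.
  induction (noetherian_of_measure w) as [w _ IH].
  destruct (classic (exists w', step Rl w w')) as [[w' S] | N].
  - destruct (IH w' S) as (r & ? & ?); exists r; split; auto.
    eapply rt_trans; [apply rt_step|]; eauto.
  - exists w; split; [apply rt_refl | exact N].
Qed.

Lemma confluent_of_measure : locally_confluent Rl -> confluent Rl.
Proof.
  intros Hlc w0 w1 w2 S1 S2.
  assert (Hlc' : Relations_3.Locally_confluent (word A) (step Rl)).
  { intros x y z Sy Sz; destruct (Hlc x y z Sy Sz) as (t & ? & ?).
    exists t; split; apply Rstar_iff_clos_rt; auto. }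
  destruct (Relations_3_facts.Newman _ _ noetherian_of_measure Hlc' w0 w1 w2)
    as (t & ? & ?); try apply Rstar_iff_clos_rt; auto.
  exists t; split; apply Rstar_iff_clos_rt; auto.
Qed.

Lemma unique_terminus : locally_confluent Rl -> forall w,
  exists r, conv Rl w r /\ terminus Rl r /\
    forall r', conv Rl w r' -> terminus Rl r' -> r' = r.
Proof.
  intros Hlc w; destruct (terminus_exists w) as (r & S & T).
  exists r; split; [apply clos_rt_clos_rst, S|]; split; auto.
  intros r' C T'.
  destruct (confluent_conv_joinable r r' (confluent_of_measure Hlc)) as (z & Z & Z').
  { eapply rst_trans; [apply rst_sym, clos_rt_clos_rst, S | exact C]. }
  rewrite <- (terminus_steps _ _ T Z); symmetry; exact (terminus_steps _ _ T' Z').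
Qed.

End Measure.

Section BinaryRules.
Hypothesis rules_binary : forall l r, Rl l r -> exists p q, l = [p; q].

Lemma step_cons_cases w w' : step Rl w w' ->
  (exists p q v r, w = p :: q :: v /\ w' = r ++ v /\ Rl [p; q] r) \/
  (exists c u u', w = c :: u /\ w' = c :: u' /\ step Rl u u').
Proof.
  intros (v0 & v1 & v1' & v2 & -> & -> & H).
  destruct (rules_binary _ _ H) as (p & q & ->).
  destruct v0 as [|c v0]; [left; exists p, q, v2, v1'; auto|].
  right; exists c, (v0 ++ [p; q] ++ v2), (v0 ++ v1' ++ v2).
  repeat split; exists v0, [p; q], v1', v2; auto.
Qed.

Hypothesis rules_functional : forall l r r', Rl l r -> Rl l r' -> r = r'.
Hypothesis critical_pairs_joinable : forall p q t r r',
  Rl [p; q] r -> Rl [q; t] r' -> joinable (r ++ [t]) (p :: r').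

Lemma head_step_joinable p q v r u' :
  Rl [p; q] r -> step Rl (q :: v) u' -> joinable (r ++ v) (p :: u').
Proof.
  intros H1 H2.
  destruct (step_cons_cases _ _ H2)
    as [(q' & t & v' & r' & E & -> & H3) | (c & u & u2 & E & -> & H3)];
    injection E as -> ->.
  - destruct (critical_pairs_joinable _ _ _ _ _ H1 H3) as (z & Z & Z').
    exists (z ++ v'); split.
    + replace (r ++ t :: v') with ((r ++ [t]) ++ v') by (rewrite <- app_assoc; auto).
      apply steps_app_r; auto.
    + apply (steps_app_r _ _ v') in Z'; exact Z'.
  - exists (r ++ u2); split.
    + apply (step_ctx r _ _ []), rt_step in H3; rewrite !app_nil_r in H3; exact H3.
    + apply rt_step, step_pair_head, H1.
Qed.

Lemma locally_confluent_of_critical_pairs : locally_confluent Rl.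
Proof.
  intros w0; induction w0 as [|c w IH]; intros w1 w2 S1 S2;
    destruct (step_cons_cases _ _ S1)
      as [(p & q & v & r & E1 & -> & H1) | (c1 & u & u1 & E1 & -> & H1)];
    destruct (step_cons_cases _ _ S2)
      as [(p' & q' & v' & r' & E2 & -> & H2) | (c2 & u' & u2 & E2 & -> & H2)];
    try discriminate; rewrite E1 in E2.
  - injection E2 as <- <- <-; rewrite (rules_functional _ _ _ H1 H2).
    exists (r' ++ v); split; apply rt_refl.
  - injection E2 as <- <-; eapply head_step_joinable; eauto.
  - injection E2 as -> ->.
    destruct (head_step_joinable _ _ _ _ _ H2 H1) as (z & ? & ?); exists z; auto.
  - injection E1 as -> ->; injection E2 as <- <-.
    destruct (IH _ _ H1 H2) as (z & ? & ?); exists (c1 :: z); split; apply steps_cons; auto.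
Qed.

End BinaryRules.
End Rewriting.

Lemma conv_of_rules A (R1 R2 : word A -> word A -> Prop) :
  (forall l r, R1 l r -> conv R2 l r) -> forall w w', conv R1 w w' -> conv R2 w w'.
Proof.
  intros H w w'; induction 1 as [x y (v0 & v1 & v1' & v2 & -> & -> & Hr) | | |].
  - apply conv_ctx, H, Hr.
  - apply rst_refl.
  - apply rst_sym; auto.
  - eapply rst_trans; eauto.
Qed.

Section FreeCancellation.
Context {A : Type} {Rl : word A -> word A -> Prop}.
Hypothesis conv_cancel : forall x : letter A, conv Rl [x; linv x] [].

Definition word_inv (w : word A) : word A := rev (map linv w).

Lemma linv_involutive (x : letter A) : linv (linv x) = x.
Proof. destruct x as [x s]; unfold linv; simpl; rewrite Bool.negb_involutive; auto. Qed.

Lemma word_inv_involutive w : word_inv (word_inv w) = w.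
Proof.
  unfold word_inv; rewrite map_rev, rev_involutive, map_map.
  rewrite (map_ext _ _ linv_involutive); apply map_id.
Qed.

Lemma conv_cancel_r w : conv Rl (w ++ word_inv w) [].
Proof.
  induction w as [|x w IH]; [apply rst_refl|].
  unfold word_inv in *; simpl.
  replace (x :: w ++ rev (map linv w) ++ [linv x])
    with ([x] ++ (w ++ rev (map linv w)) ++ [linv x]) by (simpl; rewrite app_assoc; auto).
  eapply rst_trans; [apply conv_ctx, IH | apply conv_cancel].
Qed.

Lemma conv_cancel_l w : conv Rl (word_inv w ++ w) [].
Proof.
  rewrite <- (word_inv_involutive w) at 2; apply conv_cancel_r.
Qed.

Lemma conv_move_r u v w : conv Rl (u ++ v) w -> conv Rl u (w ++ word_inv v).
Proof.
  intros H; eapply rst_trans.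
  - pose proof (conv_ctx u _ _ [] (conv_cancel_r v)) as Hc.
    rewrite !app_nil_r in Hc; apply rst_sym, Hc.
  - rewrite app_assoc; apply (conv_ctx [] _ _ (word_inv v)), H.
Qed.

Lemma conv_move_l u v w : conv Rl (u ++ v) w -> conv Rl v (word_inv u ++ w).
Proof.
  intros H; eapply rst_trans.
  - pose proof (conv_ctx [] _ _ v (conv_cancel_l u)) as Hc.
    apply rst_sym, Hc.
  - rewrite <- app_assoc; apply (conv_ctx (word_inv u) _ _ []) in H.
    rewrite !app_nil_r in H; exact H.
Qed.

Lemma conv_word_inv u v : conv Rl u v -> conv Rl (word_inv u) (word_inv v).
Proof.
  intros H; apply (conv_move_r _ _ []).
  pose proof (conv_ctx (word_inv u) _ _ [] (rst_sym _ _ _ _ H)) as Hc.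
  rewrite !app_nil_r in Hc; eapply rst_trans; [exact Hc | apply conv_cancel_l].
Qed.

End FreeCancellation.

Section Weight.
Context {A : Type}.

Fixpoint ones (w : word A) : nat :=
  match w with [] => 0 | x :: w' => (if snd (fst x) then 1 else 0) + ones w' end.

Fixpoint inversions (w : word A) : nat :=
  match w with [] => 0 | x :: w' => (if snd (fst x) then 0 else ones w') + inversions w' end.

Definition weight (w : word A) : nat := length w + inversions w.

End Weight.

Section Rules.
Context {A : Type} (blk : A -> nat) (lt : A -> A -> Prop).
Hypothesis HZ : blocks_Z blk lt.

Lemma is_succ_pred_unique a a' b :
  is_succ blk lt a b -> is_succ blk lt a' b -> a = a'.
Proof.
  intros [Hb [Hab Hn]] [Hb' [Hab' Hn']].
  destruct (HZ (blk b)) as [f [Hf1 [Hf2 Hf3]]].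
  destruct (Hf2 a (eq_sym Hb)) as [za <-], (Hf2 a' (eq_sym Hb')) as [za' <-],
    (Hf2 b eq_refl) as [zb <-].
  apply Hf3 in Hab, Hab'.
  destruct (Z.lt_trichotomy za za') as [H|[<-|H]]; [exfalso | reflexivity | exfalso].
  - apply Hn; exists (f za'); repeat split; [rewrite !Hf1; auto | apply Hf3; lia ..].
  - apply Hn'; exists (f za); repeat split; [rewrite !Hf1; auto | apply Hf3; lia ..].
Qed.

Lemma rule_binary l r : rule blk lt l r -> exists p q, l = [p; q].
Proof. intros H; inversion H; eauto. Qed.

Lemma rule_functional l r r' : rule blk lt l r -> rule blk lt l r' -> r = r'.
Proof.
  intros H H'; inversion H; subst; inversion H'; subst; auto;
  repeat match goal with
  | H1 : is_succ _ _ ?a ?b, H2 : is_succ _ _ ?c ?b |- _ =>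
      assert (a = c) by (eapply is_succ_pred_unique; eauto); subst c; clear H2
  end; auto.
Qed.

Ltac apply_rule := first [apply r1 | apply r2 | apply r3 | apply r4
  | eapply r5; eassumption | eapply r6; eassumption
  | eapply r7; eassumption | eapply r8; eassumption].
Ltac rewrite_once := cbn [app];
  first [eapply step_pair_head; apply_rule | apply step_cons; rewrite_once].
Ltac rewrite_to_terminus :=
  repeat (eapply rt_trans; [apply rt_step; rewrite_once |]); apply rt_refl.

Lemma rule_critical_pairs p q t r r' :
  rule blk lt [p; q] r -> rule blk lt [q; t] r' ->
  joinable (Rl := rule blk lt) (r ++ [t]) (p :: r').
Proof.
  intros H1 H2; inversion H1; subst; inversion H2; subst;
    eexists; split; rewrite_to_terminus.
Qed.

Lemma step_weight w w' : step (rule blk lt) w w' ->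
  weight w' < weight w /\ ones w' <= ones w.
Proof.
  unfold weight; revert w'; induction w as [|c w IH]; intros w' S;
    destruct (step_cons_cases rule_binary _ _ S)
      as [(p & q & v & r & E & -> & H) | (c1 & u & u1 & E & -> & H)];
    try discriminate; injection E as -> ->.
  - inversion H; subst; simpl; lia.
  - destruct (IH _ H); simpl; destruct (snd (fst c1)); lia.
Qed.

Lemma terminus_freely_reduced w : terminus (rule blk lt) w -> freely_reduced w.
Proof.
  intros T (u & v & [[a i] s] & ->); apply T.
  exists (u ++ v), u, [((a, i), s); linv ((a, i), s)], [], v.
  repeat split; destruct i, s; constructor.
Qed.

Lemma group_conv_cancel (x : letter A) : conv (group_rel blk lt) [x; linv x] [].
Proof. apply conv_rule, gr_free. Qed.

Section Succ.
Variables (a b : A).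
Hypothesis Hab : is_succ blk lt a b.

Lemma rule5_in_G : same_in_G blk lt [pos b false; pos a true] [neg b true; pos b false].
Proof.
  apply (conv_move_r group_conv_cancel _ [neg b false; pos b true] []).
  apply conv_rule, gr_rel, Hab.
Qed.

Lemma rule6_in_G : same_in_G blk lt [pos b false; neg a true] [pos b true; pos b false].
Proof.
  (* from (v): b0 = b1^-1 b0 a1^-1, i.e. b0 a1^-1 = b1 b0 *)
  apply (conv_move_l group_conv_cancel [neg b true] _ [pos b false]), rst_sym.
  apply (conv_move_r group_conv_cancel [pos b false] [pos a true] [neg b true; pos b false]).
  apply rule5_in_G.
Qed.

End Succ.

Lemma rule_in_G l r : rule blk lt l r -> same_in_G blk lt l r.
Proof.
  intros []; intros.
  - apply (group_conv_cancel (pos a false)).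
  - apply (group_conv_cancel (neg a false)).
  - apply (group_conv_cancel (pos a true)).
  - apply (group_conv_cancel (neg a true)).
  - apply rule5_in_G; auto.
  - apply rule6_in_G; auto.
  (* (vii) and (viii) are the inverses of (v) and (vi) *)
  - apply rst_sym; exact (conv_word_inv group_conv_cancel _ _ (rule5_in_G a b H)).
  - apply rst_sym; exact (conv_word_inv group_conv_cancel _ _ (rule6_in_G a b H)).
Qed.

Lemma group_rel_conv_rule l r : group_rel blk lt l r -> conv (rule blk lt) l r.
Proof.
  intros [[[a [|]] [|]] | a b Hab]; try (apply conv_rule; constructor).
  apply clos_rt_clos_rst; rewrite_to_terminus.
Qed.

Lemma same_in_G_iff_conv w w' : same_in_G blk lt w w' <-> conv (rule blk lt) w w'.
Proof.
  split; apply conv_of_rules; [apply group_rel_conv_rule | apply rule_in_G].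
Qed.

End Rules.

Theorem mainTheorem8 (A : Type) (blk : A -> nat) (lt : A -> A -> Prop)
  (HZ : blocks_Z blk lt) :
  terminating (rule blk lt) /\
  locally_confluent (rule blk lt) /\
  confluent (rule blk lt) /\
  (forall w : word A, exists r, conv (rule blk lt) w r /\ terminus (rule blk lt) r /\
      forall r', conv (rule blk lt) w r' -> terminus (rule blk lt) r' -> r' = r) /\
  (forall w : word A, terminus (rule blk lt) w -> freely_reduced w) /\
  (forall w : word A, exists r, same_in_G blk lt w r /\ terminus (rule blk lt) r /\
      forall r', same_in_G blk lt w r' -> terminus (rule blk lt) r' -> r' = r).
Proof.
  pose proof (fun w w' S => proj1 (step_weight blk lt w w' S)) as Hdec.
  assert (Hlc : locally_confluent (rule blk lt)).
  { exact (locally_confluent_of_critical_pairs (rule_binary blk lt)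
             (rule_functional blk lt HZ) (rule_critical_pairs blk lt)). }
  repeat split.
  - exact (terminating_of_measure weight Hdec).
  - exact Hlc.
  - exact (confluent_of_measure weight Hdec Hlc).
  - exact (unique_terminus weight Hdec Hlc).
  - exact (terminus_freely_reduced blk lt).
  - intros w; destruct (unique_terminus weight Hdec Hlc w) as (r & C & T & U).
    exists r; repeat split; [apply same_in_G_iff_conv, C | exact T |].
    intros r' C'; apply U, same_in_G_iff_conv, C'.
Qed.
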